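(* Consider the $(1,\lambda)$-CSA-ES with cumulation ($0<c<1$), any $\lambda\ge1$, $d_\sigma>0$, applied to $f(x)=[x]_1$ on $\mathbb{R}^n$. The real-valued Markov chain $([p_t]_1)_{t\in\mathbb{N}}$ is $\varphi$-irreducible and aperiodic, and every compact subset of $\mathbb{R}$ is a small set for it.
   Context: For $x\in\mathbb{R}^n$, $[x]_i$ denotes its $i$-th coordinate. The $(1,\lambda)$-CSA-ES with parameters $\lambda\ge1$, $0<c\le1$, $d_\sigma>0$, minimizing $f:\mathbb{R}^n\to\mathbb{R}$: start from $X_0\in\mathbb{R}^n$, $\sigma_0>0$, $p_0\sim\mathcal{N}(0,I_n)$; at iteration $t$ draw $\xi_{t,1},\ldots,\xi_{t,\lambda}$ i.i.d. $\sim\mathcal{N}(0,I_n)$ independent of the past, children $Y_{t,i}=X_t+\sigma_t\xi_{t,i}$; $X_{t+1}$ is the child with smallest $f$-value and $\xi^\star_t$ the corresponding $\xi_{t,i}$ (so $X_{t+1}=X_t+\sigma_t\xi^\star_t$); path $p_{t+1}=(1-c)p_t+\sqrt{c(2-c)}\,\xi^\star_t$; step-size $\sigma_{t+1}=\sigma_t\exp(\frac{c}{2d_\sigma}(\|p_{t+1}\|^2/n-1))$. On $f(x)=[x]_1$, $([p_t]_1)_t$ satisfies $[p_{t+1}]_1=(1-c)[p_t]_1+\sqrt{c(2-c)}[\xi^\star_t]_1$ with $([\xi^\star_t]_1)_t$ i.i.d., each distributed as the minimum of $\lambda$ i.i.d. standard normals, so it is a Markov chain on $\mathbb{R}$ with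 transition kernel $P$. Definitions: the chain is $\varphi$-irreducible if there is a nonzero measure $\varphi$ on the Borel sets such that for every Borel $A$ with $\varphi(A)>0$ and every starting point, $A$ is reached in finitely many steps with positive probability. A Borel set $C$ is small if there exist $m\ge1$ and a nonzero measure $\nu_m$ with $P^m(x,B)\ge\nu_m(B)$ for all $x\in C$ and Borel $B$. The chain is aperiodic if there is no $d\ge2$ and disjoint Borel sets $D_1,\ldots,D_d$ with $P(x,D_{i+1})=1$ for all $x\in D_i$ (indices mod $d$) and $(\bigcup_i D_i)^c$ being $\varphi$-null. *)

From HB Require Import structures.
From mathcomp Require Import all_boot all_order all_algebra.
From mathcomp Require Import all_classical all_reals all_analysis.

Import Order.TTheory GRing.Theory Num.Theory.
Import numFieldNormedType.Exports.
Local Open Scope classical_set_scope.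
Local Open Scope ring_scope.

(* Law of the minimum of k.+1 i.i.d. standard normal variables, built
   recursively as the pushforward, under (a,b) |-> min a b, of the product
   of a standard normal law with the law of the minimum of k of them. *)
Fixpoint minN01_law (R : realType) (k : nat) : set R -> \bar R :=
  match k with
  | 0 => normal_prob 0 1
  | k'.+1 => pushforward ((normal_prob 0 1) \x (minN01_law R k'))%E
               (fun p : R * R => Num.min p.1 p.2)
  end.

(* law of [xi*_t]_1 : minimum of lambda i.i.d. standard normals (lambda >= 1) *)
Definition xi_star_law (R : realType) (lambda : nat) : set R -> \bar R :=
  minN01_law R lambda.-1.

Definition csa_kernel (R : realType) (c : R) (lambda : nat) (x : R)
  : set R -> \bar R :=
  pushforward (xi_star_law R lambda)
    (fun z : R => (1 - c) * x + Num.sqrt (c * (2 - c)) * z).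

Fixpoint csa_kernel_n (R : realType) (c : R) (lambda : nat) (m : nat)
  (x : R) (B : set R) : \bar R :=
  match m with
  | 0 => (\1_B x)%:E
  | m'.+1 => (\int[csa_kernel R c lambda x]_y csa_kernel_n R c lambda m' y B)%E
  end.

Definition phi_irreducible (R : realType) (P : nat -> R -> set R -> \bar R)
  (phi : set R -> \bar R) : Prop :=
  phi setT != 0%E /\
  forall A : set R, measurable A -> (0 < phi A)%E ->
    forall x : R, exists m : nat, (0 < m)%N /\ (0 < P m x A)%E.

Definition small_set (R : realType) (P : nat -> R -> set R -> \bar R)
  (C : set R) : Prop :=
  measurable C /\
  exists (m : nat) (nu : {measure set R -> \bar R}),
    (0 < m)%N /\ nu setT != 0%E /\
    forall x, C x -> forall B : set R, measurable B -> (nu B <= P m x B)%E.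

Definition aperiodic (R : realType) (P : nat -> R -> set R -> \bar R)
  (phi : set R -> \bar R) : Prop :=
  ~ exists (d : nat) (D : nat -> set R),
      (2 <= d)%N /\
      (forall i, (i < d)%N -> measurable (D i)) /\
      (forall i j, (i < d)%N -> (j < d)%N -> i <> j -> D i `&` D j = set0) /\
      (forall i, (i < d)%N -> forall x, D i x -> P 1%N x (D ((i.+1) %% d)%N) = 1%E) /\
      phi (~` \bigcup_(i in [set i | (i < d)%N]) D i) = 0%E.

(* Write the chain as p' = (1 - c) p + s Z with s = sqrt (c (2 - c)) > 0 and Z
   the minimum of lambda standard normals.  On any compact set [-K, K] the
   law of Z has a density bounded below: Z lands in B /\ [-K, K] at least when
   the first normal does and all the others exceed K, an event of positive
   probability.  Pulling this back through the affine map, for |p| <= M the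
   one-step kernel dominates kap(M) times Lebesgue measure on [-1, 1].  This
   single Doeblin-type minorization gives irreducibility (for phi = Lebesgue
   measure on [-1, 1]), smallness of bounded sets, and aperiodicity: a cyclic
   class of positive phi-measure would be charged by the kernel from one of its
   own points, while all the mass must move to the next, disjoint, class. *)

From HB Require Import structures.
From mathcomp Require Import all_boot all_order all_algebra.
From mathcomp Require Import all_classical all_reals all_analysis.
From mathcomp Require Import lra.
Import Order.TTheory GRing.Theory Num.Theory.
Import numFieldNormedType.Exports.
Import measurable_realfun.
Local Open Scope classical_set_scope.
Local Open Scope ring_scope.

(* [normal_prob] and [lebesgue_measure] are measures on [measurableTypeR R],
   whereas the kernels of the chain are measures on [R] with its own
   sigma-algebra: the same sets under another display.  [onR] reads a measure
   of the former kind as one of the latter. *)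
Definition onR {R : realType} (mu : set (measurableTypeR R) -> \bar R) :
  set R -> \bar R := mu.

Section measure_on_R.
Context (R : realType).

Section measure.
Variable mu : {measure set (measurableTypeR R) -> \bar R}.
Let onR0 : onR mu set0 = 0%E. Proof. exact: measure0. Qed.
Let onR_ge0 A : (0 <= onR mu A)%E. Proof. exact: measure_ge0. Qed.
Let onR_sigma_additive : semi_sigma_additive (onR mu).
Proof. exact: (@measure_semi_sigma_additive _ _ _ mu). Qed.
HB.instance Definition _ :=
  isMeasure.Build _ R R (onR mu) onR0 onR_ge0 onR_sigma_additive.
End measure.

Section probability.
Variable P : probability (measurableTypeR R) R.
Let onR_setT : onR P setT = 1%E. Proof. exact: probability_setT. Qed.
HB.instance Definition _ := Measure_isProbability.Build _ R R (onR P) onR_setT.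
End probability.

End measure_on_R.

Section product_probability.
Context d1 d2 (T1 : measurableType d1) (T2 : measurableType d2) (R : realType).
Variables (P : probability T1 R) (Q : probability T2 R).
Let product_setT : (P \x Q)%E setT = 1%E.
Proof.
rewrite -setXTT product_measure1E// -[RHS]mule1.
by congr (_ * _)%E; exact: probability_setT.
Qed.
HB.instance Definition _ :=
  Measure_isProbability.Build _ _ _ (P \x Q)%E product_setT.
End product_probability.

(* The first factor has the type of [normal_prob], as in [minN01_law]. *)
Definition min_pair {R : realType} (p : measurableTypeR R * R) : R :=
  Num.min p.1 p.2.

Lemma measurable_min_pair (R : realType) : measurable_fun setT (@min_pair R).
Proof. by apply: measurable_minr; [exact: measurable_fst|exact: measurable_snd]. Qed.

HB.instance Definition _ (R : realType) :=
  isMeasurableFun.Build _ _ _ _ (@min_pair R) (measurable_min_pair R).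

Definition affine {R : realType} (a s z : R) : R := a + s * z.

Lemma measurable_affine (R : realType) (a s : R) : measurable_fun setT (affine a s).
Proof. by apply: measurable_funD => //; apply: measurable_funM. Qed.

HB.instance Definition _ (R : realType) (a s : R) :=
  isMeasurableFun.Build _ _ _ _ (affine a s) (measurable_affine R a s).

Fixpoint minN01_prob (R : realType) (k : nat) : probability R R :=
  if k is k'.+1 then distribution (normal_prob 0 1 \x minN01_prob R k')%E min_pair
  else onR (normal_prob (0 : R) 1).

Lemma minN01_lawE (R : realType) k : minN01_law R k = minN01_prob R k.
Proof. by elim: k => [|k IH] //=; rewrite IH. Qed.

Definition csa_prob {R : realType} (c : R) (lambda : nat) (x : R) : probability R R :=
  distribution (minN01_prob R lambda.-1)
    (affine ((1 - c) * x) (Num.sqrt (c * (2 - c)))).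

Lemma csa_kernelE (R : realType) (c : R) lambda x :
  csa_kernel R c lambda x = csa_prob c lambda x.
Proof. by rewrite /csa_kernel /xi_star_law minN01_lawE. Qed.

Lemma csa_kernel_n1 (R : realType) (c : R) lambda x (B : set R) : measurable B ->
  csa_kernel_n R c lambda 1 x B = csa_prob c lambda x B.
Proof. by move=> mB; rewrite /= csa_kernelE integral_indic// setIT. Qed.

Section gaussian_minorization.
Context (R : realType).
Local Notation mu := (@lebesgue_measure R).

Definition normal_pdf_lb (K : R) : R := normal_peak 1 * expR (- K ^+ 2 / 2).

Lemma normal_pdf_lb_gt0 K : 0 < normal_pdf_lb K.
Proof. by rewrite mulr_gt0 ?expR_gt0// normal_peak_gt0// oner_neq0. Qed.

Lemma normal_pdf_ge_lb K x : `|x| <= K -> normal_pdf_lb K <= normal_pdf 0 1 x.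
Proof.
move=> xK; rewrite normal_pdfE ?oner_neq0// /normal_pdf_lb.
rewrite ler_pM2l ?normal_peak_gt0 ?oner_neq0// /normal_fun ler_expR subr0.
rewrite expr1n !mulNr lerN2 ler_pM2r ?invr_gt0// -[x ^+ 2]ger0_norm ?sqr_ge0//.
by rewrite normrX lerXn2r// ?nnegrE ?normr_ge0// (le_trans _ xK).
Qed.

Lemma normal_prob_ge_lebesgue {K} {B : set R} : measurable B ->
  B `<=` [set x | `|x| <= K] -> ((normal_pdf_lb K)%:E * mu B <= normal_prob 0 1 B)%E.
Proof.
move=> mB BK; rewrite /normal_prob -integral_cst//.
apply: ge0_le_integral => //.
- by move=> x _; rewrite lee_fin ltW// normal_pdf_lb_gt0.
- by apply/measurable_EFinP/measurable_funTS; exact: measurable_normal_pdf.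
- by move=> x Bx; rewrite lee_fin normal_pdf_ge_lb// BK.
Qed.

Lemma normal_prob_tail_ge K : 0 <= K ->
  ((normal_pdf_lb (K + 1))%:E <= normal_prob 0 1 `[K, +oo[%classic)%E.
Proof.
move=> K0; have unit_itv : mu `[K, K + 1]%classic = 1%E.
  by rewrite lebesgue_measure_itv /= lte_fin ltrDl ltr01 -EFinB addrAC subrr add0r.
apply: (@le_trans _ _ (normal_prob 0 1 `[K, K + 1]%classic)).
  rewrite -[leLHS]mule1 -unit_itv; apply: normal_prob_ge_lebesgue => // x /=.
  rewrite in_itv /= => /andP[Kx xK1].
  by rewrite ger0_norm ?(le_trans K0)// (le_trans xK1)// lerDl.
apply: le_measure; rewrite ?inE// => x /=.
by rewrite !in_itv /= andbT => /andP[].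
Qed.

Lemma min_pair_prob_geX (Q : probability R R) {A C B : set R} :
  measurable A -> measurable C -> measurable B -> A `*` C `<=` min_pair @^-1` B ->
  (normal_prob 0 1 A * Q C <= distribution (normal_prob 0 1 \x Q)%E min_pair B)%E.
Proof.
move=> mA mC mB ACB; rewrite -product_measure1E//.
apply: le_measure; rewrite ?inE//; first exact: measurableX.
by rewrite -[X in measurable X]setTI; exact: measurable_min_pair.
Qed.

Lemma minN01_prob_tail_gt0 k K : 0 <= K ->
  exists2 t : R, 0 < t & (t%:E <= minN01_prob R k `[K, +oo[%classic)%E.
Proof.
move=> K0; elim: k => [|k [t t0 tail]].
  exists (normal_pdf_lb (K + 1)); first exact: normal_pdf_lb_gt0.
  exact: normal_prob_tail_ge.
exists (normal_pdf_lb (K + 1) * t); first by rewrite mulr_gt0 ?normal_pdf_lb_gt0.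
have mK : measurable `[K, +oo[%classic by [].
apply: le_trans _ (min_pair_prob_geX (minN01_prob R k) mK mK mK _); last first.
  by move=> [a b] /=; rewrite !in_itv /= !andbT => -[Ka Kb]; rewrite le_min Ka.
rewrite EFinM; apply: lee_pmul => //; last exact: normal_prob_tail_ge.
- by rewrite lee_fin ltW// normal_pdf_lb_gt0.
- by rewrite lee_fin ltW.
Qed.

Lemma minN01_prob_ge_lebesgue k K : 0 <= K ->
  exists2 kap : R, 0 < kap & forall B : set R, measurable B ->
    (kap%:E * mu (B `&` `[(- K)%R, K]%classic) <= minN01_prob R k B)%E.
Proof.
move=> K0; have BK B : B `&` `[(- K)%R, K]%classic `<=` [set x | `|x| <= K].
  by move=> x [_ /=]; rewrite in_itv /= -ler_norml.
have mBK B : measurable B -> measurable (B `&` `[(- K)%R, K]%classic).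
  by move=> mB; exact: measurableI.
case: k => [|k].
  exists (normal_pdf_lb K) => [|B mB]; first exact: normal_pdf_lb_gt0.
  apply: le_trans (normal_prob_ge_lebesgue (mBK B mB) (BK B)) _.
  by apply: le_measure; rewrite ?inE//; exact: mBK.
have [t t0 tail] := minN01_prob_tail_gt0 k K K0.
exists (normal_pdf_lb K * t) => [|B mB]; first by rewrite mulr_gt0 ?normal_pdf_lb_gt0.
have mK : measurable `[K, +oo[%classic by [].
apply: le_trans _ (min_pair_prob_geX (minN01_prob R k) (mBK B mB) mK mB _); last first.
  move=> [a b] /= [[Ba]]; rewrite !in_itv /= andbT => /andP[_ aK] Kb.
  by rewrite /min_pair min_l// (le_trans aK).
rewrite EFinM muleAC; apply: lee_pmul => //.
- by rewrite mule_ge0// lee_fin ltW// normal_pdf_lb_gt0.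
- by rewrite lee_fin ltW.
- exact: normal_prob_ge_lebesgue (mBK B mB) (BK B).
Qed.

End gaussian_minorization.

Lemma affine_preimage_itv_oc (R : realType) (a s u v : R) : 0 < s ->
  affine a s @^-1` `]u, v]%classic = `](u - a) / s, (v - a) / s]%classic.
Proof.
move=> s0; apply/seteqP; split => z /=; rewrite /affine !in_itv /=.
- by rewrite ltr_pdivrMr// ler_pdivlMr// ltrBlDl lerBrDl ![s * z]mulrC.
- by rewrite ltr_pdivrMr// ler_pdivlMr// ltrBlDl lerBrDl ![s * z]mulrC.
Qed.

Lemma lebesgue_measure_affine_preimage (R : realType) (a s : R) (A : set R) :
  0 < s -> measurable A ->
  lebesgue_measure (affine a s @^-1` A) = ((s^-1)%:E * lebesgue_measure A)%E.
Proof.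
move=> s0 mA.
have mf : measurable_fun [set: measurableTypeR R]
    (affine a s : measurableTypeR R -> measurableTypeR R).
  by apply: measurable_funD => //; exact: measurable_funM.
rewrite [lebesgue_measure A](@lebesgue_measure_unique R (mscale (NngNum (ltW s0))
  (pushforward lebesgue_measure
     (affine a s : measurableTypeR R -> measurableTypeR R)))) //=.
  by rewrite muleA -EFinM mulVf ?gt_eqF// mul1e.
move=> _ [[u v] _ <-]; rewrite /mscale /= /pushforward affine_preimage_itv_oc//.
rewrite !lebesgue_measure_itv /= !lte_fin ltr_pM2r ?invr_gt0// ltrD2r.
case: ifP => _; last by rewrite mule0.
by rewrite -!EFinB -EFinM -mulrBl opprB addrA subrK mulrC divfK ?gt_eqF.
Qed.

Lemma affine_preimage_sub_itv {R : realType} {a s K : R} : 0 < s ->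
  `|a| + 1 <= s * K -> affine a s @^-1` `[-1, 1]%classic `<=` `[- K, K]%classic.
Proof.
move=> s0 aK z /=; rewrite /affine !in_itv /= -!ler_norml => az1.
rewrite -(ler_pM2l s0) (le_trans _ aK)// -[s]gtr0_norm// -normrM.
have -> : s * z = a + s * z - a by rewrite addrAC subrr add0r.
by rewrite (le_trans (ler_normB _ _))// addrC lerD.
Qed.

Lemma csa_prob_ge_lebesgue {R : realType} {c : R} (lambda : nat) {M : R} :
  0 < c -> c < 2 -> 0 <= M ->
  exists2 kap : R, 0 < kap & forall x, `|x| <= M -> forall B : set R, measurable B ->
    (kap%:E * lebesgue_measure (B `&` `[(-1)%R, 1%R]%classic)
      <= csa_prob c lambda x B)%E.
Proof.
move=> c0 c2 M0; set s := Num.sqrt (c * (2 - c)).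
have s0 : 0 < s by rewrite sqrtr_gt0 mulr_gt0// subr_gt0.
set K := (`|1 - c| * M + 1) / s.
have K0 : 0 <= K by apply: divr_ge0; [rewrite addr_ge0 ?mulr_ge0|exact: ltW].
have [kap kap0 minN01_ge] := minN01_prob_ge_lebesgue R lambda.-1 K K0.
exists (kap / s) => [|x xM B mB]; first by rewrite divr_gt0.
set a := (1 - c) * x.
have aK : `|a| + 1 <= s * K.
  by rewrite /K mulrC divfK ?gt_eqF// lerD2r normrM ler_wpM2l.
have mB1 : measurable (B `&` `[-1, 1]%classic) by exact: measurableI.
have mpre : measurable (affine a s @^-1` B).
  by rewrite -[X in measurable X]setTI; exact: measurable_affine.
apply: le_trans (minN01_ge _ mpre); rewrite EFinM -muleA.
rewrite -(lebesgue_measure_affine_preimage R a s _ s0 mB1).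
apply: lee_wpmul2l; first by rewrite lee_fin ltW.
apply: le_measure; rewrite ?inE//.
- by rewrite -[X in measurable X]setTI; exact: measurable_affine.
- exact: measurableI.
- by move=> z [Bz I1z]; split => //; exact: (affine_preimage_sub_itv s0 aK _ I1z).
Qed.

Lemma succ_modn_neq (d i : nat) : (1 < d)%N -> (i < d)%N -> (i.+1 %% d)%N != i.
Proof.
move=> d1 id; rewrite -{2}(modn_small id) -addn1 -{2}[i]addn0.
by rewrite eqn_modDl (modn_small d1) mod0n.
Qed.

Section measure_cover.
Context {d} {T : measurableType d} {R : realType} (phi : {measure set T -> \bar R}).

Lemma measure_fin_cover_pos {n : nat} {D : nat -> set T} :
  phi setT != 0%E -> (forall i, (i < n)%N -> measurable (D i)) ->
  (forall i j, (i < n)%N -> (j < n)%N -> i <> j -> D i `&` D j = set0) ->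
  phi (~` \bigcup_(i in [set i | (i < n)%N]) D i) = 0%E ->
  exists2 i, (i < n)%N & (0 < phi (D i))%E.
Proof.
move=> phiT mD disjD phiC; apply: contraNP phiT => no_pos.
have phiD0 i : (i < n)%N -> phi (D i) = 0%E.
  move=> ilt; apply/eqP; rewrite eq_le measure_ge0 andbT leNgt.
  by apply/negP => pos; apply: no_pos; exists i.
set U := \bigcup_(i in [set i | (i < n)%N]) D i.
have mU : measurable U by apply: bigcup_measurable => i; exact: mD.
have phiU : phi U = 0%E.
  rewrite measure_bigcup//=; first by apply: eseries0 => i _; rewrite inE => /phiD0.
  move=> i j ilt jlt [z [Diz Djz]]; apply: contrapT => ij.
  by have := disjD i j ilt jlt ij; rewrite -subset0 => /(_ z) /=; apply.
apply/eqP/(@eq_trans _ _ (0 + 0)%E); last exact: adde0.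
rewrite -(setUv U) measureU//.
- by congr (_ + _)%E; [exact: phiU|exact: phiC].
- by apply: measurableC.
- exact: setICr.
Qed.

End measure_cover.

Section one_step_minorization.
Context {R : realType} (P : nat -> R -> set R -> \bar R).
Variable phi : {measure set R -> \bar R}.
Hypothesis phiT : phi setT != 0%E.

Definition minorized_on (C : set R) : Prop :=
  exists2 kap : R, 0 < kap & forall x, C x -> forall B, measurable B ->
    (kap%:E * phi B <= P 1%N x B)%E.

Lemma small_set_of_minorized C : measurable C -> minorized_on C -> small_set R P C.
Proof.
move=> mC [kap kap0 minor]; split => //.
exists 1%N, (mscale (NngNum (ltW kap0)) phi); split=> //; split => //.
by rewrite /mscale /= mule_eq0 negb_or eqe gt_eqF.
Qed.

Hypothesis minorized_points : forall x, minorized_on [set x].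

Lemma phi_irreducible_of_minorized : phi_irreducible R P phi.
Proof.
split=> // A mA phiA x; exists 1%N; split=> //.
have [kap kap0 minor] := minorized_points x.
by apply: lt_le_trans (minor x erefl A mA); rewrite mule_gt0// lte_fin.
Qed.

Hypothesis P1_probability : forall x, exists Q : probability R R,
  forall B, measurable B -> P 1%N x B = Q B.

Lemma aperiodic_of_minorized : aperiodic R P phi.
Proof.
move=> [d [D [d2 [mD [disjD [cycD null]]]]]].
have [i id phiDi] := measure_fin_cover_pos phi phiT mD disjD null.
have [y Dy] : D i !=set0.
  by apply/set0P; apply: contraTneq phiDi => ->; rewrite measure0 ltxx.
have [Q PQ] := P1_probability y.
set j := (i.+1 %% d)%N.
have jd : (j < d)%N by rewrite ltn_pmod// (leq_trans _ d2).
have QDj : Q (D j) = 1%E by rewrite -PQ; [exact: cycD i id y Dy|exact: mD].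
have QDi : (0 < Q (D i))%E.
  have [kap kap0 minor] := minorized_points y.
  rewrite -PQ; last exact: mD.
  by apply: lt_le_trans (minor y erefl _ (mD i id)); rewrite mule_gt0// lte_fin.
have QDij : Q (D i `|` D j) = (Q (D i) + 1)%E.
  rewrite measureU; [by congr (_ + _)%E|exact: mD|exact: mD|].
  by apply: disjD => //; apply/nesym/eqP; exact: succ_modn_neq.
have := probability_le1 Q (measurableU _ _ (mD i id) (mD j jd)).
by rewrite QDij leNgt lteDr// QDi.
Qed.

End one_step_minorization.

Theorem lemma12 (R : realType) (n : nat) (lambda : nat) (c d_sigma : R) :
  (0 < n)%N -> (1 <= lambda)%N -> 0 < c -> c < 1 -> 0 < d_sigma ->
  (exists phi : {measure set R -> \bar R},
      phi_irreducible R (csa_kernel_n R c lambda) phi /\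
      aperiodic R (csa_kernel_n R c lambda) phi) /\
  (forall C : set R, compact C -> small_set R (csa_kernel_n R c lambda) C).
Proof.
move=> _ _ c0 c1 _; have c2 : c < 2 by lra.
pose phi := mrestr (onR (@lebesgue_measure R)) (measurable_itv `[(-1)%R, 1%R]).
have phiT : phi setT != 0%E.
  by rewrite /phi /mrestr setTI /onR lebesgue_measure_itv /= lte_fin gtrN.
have minorized M : 0 <= M ->
    minorized_on (csa_kernel_n R c lambda) phi [set x | `|x| <= M].
  move=> M0; have [kap kap0 minor] := csa_prob_ge_lebesgue lambda c0 c2 M0.
  by exists kap => // x xM B mB; rewrite csa_kernel_n1//; exact: minor.
have minorized_points x : minorized_on (csa_kernel_n R c lambda) phi [set x].
  have [kap kap0 minor] := minorized `|x| (normr_ge0 x).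
  by exists kap => // _ -> B mB; exact: (minor x (lexx _) B mB).
split.
  exists phi; split.
    exact: phi_irreducible_of_minorized _ _ phiT minorized_points.
  apply: (aperiodic_of_minorized _ _ phiT minorized_points) => x.
  by exists (csa_prob c lambda x) => B mB; rewrite csa_kernel_n1.
move=> C cC; apply: (small_set_of_minorized _ phi phiT).
  exact: compact_measurable.
have [M [_ CM]] := compact_bounded cC.
have [kap kap0 minor] := minorized (`|M| + 1) (addr_ge0 (normr_ge0 M) ler01).
exists kap => // x Cx; apply: minor; apply: CM Cx.
by rewrite (le_lt_trans (ler_norm M))// ltrDl.
Qed.
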